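(* Let $p$ be a prime, $q$ and $r$ powers of $p$, and $n$ an integer prime to $p$. Let $S^\times=(\mathbb Z/n\mathbb Z)^\times\times\mathbb F_q^\times$, with $\langle r\rangle$ acting by $r\cdot(i,\alpha)=(ri,\alpha^{1/r})$, and let $O^\times$ be the set of orbits. Then (1) $\sum_{o\in O^\times}|o|=|S^\times|=\varphi(n)(q-1)$; (2) $|O^\times|\ll q/\log q$; (3) $\sum_{o\in O^\times}\log|o|\ll q\log\log q/\log q$, where the implied constants depend only on $r$ and $n$ (and $q$ varies over powers of $p$).
   Context: $\varphi$ denotes Euler's totient function. *)

From HB Require Import structures.
From mathcomp Require Import all_boot all_order all_algebra.
From Stdlib Require Import Reals.
Set Implicit Arguments. Unset Strict Implicit. Unset Printing Implicit Defensive.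

Section Defs.
Local Open Scope ring_scope.
Variables (r n : nat) (F : finFieldType).

(* alpha^{1/r}: the y in F with y^r = alpha (unique when r is a power of char F). *)
Definition rroot (a : F) : F := odflt a [pick y : F | y ^+ r == a].

Definition mulr_mod (i : 'I_n) : 'I_n :=
  Ordinal (ltn_pmod (r * i)%N (leq_ltn_trans (leq0n i) (ltn_ord i))).

Definition ract (x : 'I_n * F) : 'I_n * F := (mulr_mod x.1, rroot x.2).

Definition Sx : {set 'I_n * F} := [set x : 'I_n * F | coprime x.1 n && (x.2 != 0)].

(* the <r>-orbit of x (r acts through a permutation of finite order,
   so the forward orbit is the full group orbit) *)
Definition rorbit (x : 'I_n * F) : {set 'I_n * F} := [set y | fconnect ract x y].

Definition Ox : {set {set 'I_n * F}} := [set rorbit x | x in Sx].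

End Defs.

From mathcomp Require Import all_boot all_algebra.
From mathcomp Require Import finfield cyclic zify.
From Stdlib Require Import Reals Lra.
(* Stdlib's [Reals] rebinds [^] on [nat] to [Nat.pow]; restore [expn]. *)
From mathcomp Require Import ssrnat.
Set Implicit Arguments. Unset Strict Implicit. Unset Printing Implicit Defensive.
Import GRing.Theory.

(* Write r = p^k and |F| = q = p^m.  Since x^(r^m) = x on F and r^phi(n) = 1 mod n,
   the generator (i, a) |-> (r i, a^(1/r)) is a permutation of S^x of period
   dividing m phi(n), so the orbits partition S^x and have size at most n m.
   A point (i, a) on an orbit of size j satisfies a^(r^j) = a, and such nonzero a
   are roots of unity of order dividing r^j - 1, so there are fewer than r^j of
   them: at most n L r^L orbits have size <= L, while at most |S^x| / L orbits
   are larger.  Taking L = m / 4k makes L (L+1) r^L <= q, whence |O^x| m << q, i.e.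
   |O^x| << q / log q, and sum log|o| <= |O^x| log(n m) << |O^x| log log q. *)

Lemma totient_leq n : totient n <= n.
Proof.
rewrite totient_count_coprime -[n in _ <= n]subn0 -[n - 0]muln1 -sum_nat_const_nat.
by apply: leq_sum => i _; apply: leq_b1.
Qed.

Lemma card_bigcup_le (T I : finType) (P : pred I) (A : I -> {set T}) :
  #|\bigcup_(i | P i) A i| <= \sum_(i | P i) #|A i|.
Proof.
elim/big_ind2: _ => [|B1 m1 B2 m2 le1 le2|//]; first by rewrite cards0.
by apply: leq_trans (leq_card_setU _ _) (leq_add le1 le2).
Qed.

Lemma card_Sx n (F : finFieldType) : #|Sx n F| = totient n * (#|F| - 1).
Proof.
have -> : Sx n F = setX [set i : 'I_n | coprime i n] [set~ @GRing.zero F].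
  by apply/setP => -[i a]; rewrite !inE.
rewrite cardsX cardsC1 subn1 totient_count_coprime big_mkord -sum1_card big_mkcond /=.
by congr (_ * _); apply: eq_bigr => i _; rewrite inE coprime_sym; case: coprime.
Qed.

Section FixedPointsOfPowers.
Local Open Scope ring_scope.
Variable F : finFieldType.

Definition nz_fixed_expr d : {set F} := [set a : F | (a != 0) && (a ^+ d == a)].

Lemma expf_card_exp (x : F) j : x ^+ (#|F| ^ j) = x.
Proof. by elim: j => [|j IHj]; rewrite ?expr1 // expnSr exprM IHj expf_card. Qed.

Lemma card_nz_fixed_expr d : (1 < d)%N -> (#|nz_fixed_expr d| <= d.-1)%N.
Proof.
move=> d_gt1; rewrite cardE; apply: max_unity_roots; last exact: enum_uniq.
  by rewrite -ltnS prednK // ltnW.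
apply/allP => a; rewrite mem_enum inE unity_rootE => /andP[a_neq0 /eqP a_fixed].
by apply/eqP/(mulIf a_neq0); rewrite mul1r -exprSr prednK ?a_fixed // ltnW.
Qed.

End FixedPointsOfPowers.

Lemma fcycle_traject (T : finType) (f : T -> T) x N :
  iter N.+1 f x = x -> fcycle f (traject f x N.+1).
Proof.
move=> periodic; rewrite trajectS /cycle rcons_path fpath_traject /=.
by rewrite last_traject -iterS periodic.
Qed.

Lemma order_le_period (T : finType) (f : T -> T) x N :
  0 < N -> iter N f x = x -> order f x <= N.
Proof.
case: N => // N _ periodic; rewrite -[N.+1](size_traject f x).
by apply: (order_le_cycle (fcycle_traject periodic)); rewrite trajectS mem_head.
Qed.

Section RootAction.

Variables (r n e : nat) (F : finFieldType).
Hypotheses (r_gt1 : 1 < r) (coprime_rn : coprime r n) (e_gt0 : 0 < e).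
Local Open Scope ring_scope.
Hypothesis expr_rK : forall x : F, x ^+ (r ^ e) = x.

Local Notation ract := (@ract r n F).
Local Notation Sx := (Sx n F).
Local Notation Ox := (Ox r n F).
Local Notation rorbit := (@rorbit r n F).

Lemma rrootK (a : F) : rroot r a ^+ r = a.
Proof.
rewrite /rroot; case: pickP => [y /eqP -> //|/(_ (a ^+ (r ^ e.-1)))].
by rewrite -exprM -expnSr prednK // expr_rK eqxx.
Qed.

Lemma iter_rrootK j (a : F) : iter j (@rroot r F) a ^+ (r ^ j) = a.
Proof. by elim: j a => [|j IHj] a; rewrite ?expr1 // iterSr expnSr exprM IHj rrootK. Qed.

Lemma expr_rK_exp (x : F) t : x ^+ ((r ^ e) ^ t) = x.
Proof. by elim: t => [|t IHt]; rewrite ?expr1 // expnSr exprM IHt expr_rK. Qed.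

Local Close Scope ring_scope.

Lemma iter_mulr_mod j (i : 'I_n) : val (iter j (@mulr_mod r n) i) = r ^ j * i %% n.
Proof.
elim: j => [|j IHj]; first by rewrite mul1n modn_small.
by rewrite iterS /= IHj modnMmr mulnA -expnS.
Qed.

Lemma iter_ract j x :
  iter j ract x = (iter j (@mulr_mod r n) x.1, iter j (@rroot r F) x.2).
Proof. by elim: j => [|j IHj]; [case: x | rewrite !iterS IHj]. Qed.

Let period := e * totient n.

Lemma period_gt0 : 0 < period.
Proof.
rewrite muln_gt0 e_gt0 totient_gt0 lt0n; apply: contraTneq coprime_rn => ->.
by rewrite /coprime gcdn0 neq_ltn r_gt1 orbT.
Qed.

Lemma iter_ract_period x : iter period ract x = x.
Proof.
case: x => i a; rewrite iter_ract /=; congr (_, _).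
  have r_period : r ^ period = 1 %[mod n].
    by rewrite /period mulnC expnM -modnXm Euler_exp_totient // modnXm exp1n.
  by apply: val_inj; rewrite iter_mulr_mod -modnMml r_period modnMml mul1n modn_small.
by rewrite -[RHS](iter_rrootK period) /period expnM expr_rK_exp.
Qed.

Lemma ract_inj : injective ract.
Proof.
move=> x y eq_ract; rewrite -[x]iter_ract_period -[y]iter_ract_period.
by rewrite -(prednK period_gt0) !iterSr eq_ract.
Qed.

Lemma ract_Sx x : (ract x \in Sx) = (x \in Sx).
Proof.
case: x => i a; rewrite !inE /= coprime_modl coprimeMl coprime_rn /=.
by rewrite -{2}(rrootK a) expf_eq0 (ltnW r_gt1).
Qed.

Lemma Ox_partition : partition Ox Sx.
Proof.
have Sx_closed : closed (frel ract) Sx by move=> x y /eqP <-; rewrite ract_Sx.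
have -> : Ox = equivalence_partition (fconnect ract) Sx.
  apply: eq_in_imset => x Sx_x; apply/setP => y; rewrite [LHS]inE [RHS]inE.
  by case xy: (fconnect ract x y); rewrite ?andbF // andbT -(closed_connect Sx_closed xy).
apply: equivalence_partitionP => x y z _ _ _; split; first exact: connect0.
by move=> xy; apply: (same_connect (fconnect_sym ract_inj)) xy z.
Qed.

Lemma sum_card_Ox : \sum_(o in Ox) #|o| = #|Sx|.
Proof. by rewrite (card_partition Ox_partition). Qed.

Lemma card_rorbit x : #|rorbit x| = order ract x.
Proof. by apply: eq_card => y; rewrite inE. Qed.

Lemma card_Ox_le o : o \in Ox -> 0 < #|o| <= period.
Proof.
case/imsetP => x _ ->; rewrite card_rorbit order_gt0.
exact: order_le_period period_gt0 (iter_ract_period x).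
Qed.

Lemma card_small_Ox L : #|[set o in Ox | #|o| <= L]| <= n * (L * r ^ L).
Proof.
pose small_points := [set x in Sx | order ract x <= L].
apply: (@leq_trans #|rorbit @: small_points|).
  apply/subset_leq_card/subsetP => o; rewrite !inE => /andP[/imsetP[x Sx_x ->]].
  by rewrite card_rorbit => small_x; apply: imset_f; rewrite inE Sx_x.
apply: leq_trans (leq_imset_card _ _) _.
apply: (@leq_trans #|setX [set: 'I_n] (\bigcup_(j < L) nz_fixed_expr F (r ^ j.+1))|).
  apply/subset_leq_card/subsetP => -[i a]; rewrite !inE /= => /andP[/andP[_ a_neq0] small].
  have [j j_lt_L ord_ia] : exists2 j, j < L & order ract (i, a) = j.+1.
    by exists (order ract (i, a)).-1; rewrite prednK ?order_gt0.
  apply/bigcupP; exists (Ordinal j_lt_L) => //; rewrite inE a_neq0 /=.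
  have := iter_order ract_inj (i, a); rewrite ord_ia iter_ract => -[_ fixed_a].
  by rewrite -{1}fixed_a -iterS iter_rrootK.
rewrite cardsX cardsT card_ord leq_mul2l; apply/orP; right.
rewrite -[X in X * _](card_ord L) -sum_nat_const.
apply: leq_trans (card_bigcup_le _ _) _; apply: leq_sum => j _.
have r_pow_gt1 : 1 < r ^ j.+1 by rewrite -(exp1n j.+1) ltn_exp2r.
apply: leq_trans (leq_trans (card_nz_fixed_expr F r_pow_gt1) (leq_pred _)) _.
by rewrite leq_pexp2l ?ltn_ord // ltnW.
Qed.

Lemma card_large_Ox L : #|[set o in Ox | L < #|o|]| * L.+1 <= #|Sx|.
Proof.
rewrite -sum_card_Ox -sum_nat_const.
apply: (@leq_trans (\sum_(o in [set o in Ox | L < #|o|]) #|o|)).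
  by apply: leq_sum => o; rewrite inE => /andP[].
by apply: (sub_le_big leqnn (fun m k => leq_addr k m)) => o; rewrite inE => /andP[].
Qed.

Lemma card_Ox_bound L : #|Ox| * L.+1 <= n * (L * r ^ L) * L.+1 + #|Sx|.
Proof.
pose small := [set o : {set 'I_n * F} | #|o| <= L].
rewrite -(cardsID small Ox) mulnDl leq_add //.
  have -> : Ox :&: small = [set o in Ox | #|o| <= L] by apply/setP => o; rewrite !inE.
  by rewrite leq_mul2r card_small_Ox orbT.
have -> : Ox :\: small = [set o in Ox | L < #|o|].
  by apply/setP => o; rewrite !inE ltnNge andbC.
exact: card_large_Ox.
Qed.

End RootAction.

Lemma small_orbit_budget p k m L :
  1 < p -> 0 < k -> L * (4 * k) <= m -> L * (p ^ k) ^ L * L.+1 <= p ^ m.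
Proof.
move=> p_gt1 k_gt0 Lk_le_m; have L_lt_pL := ltn_expl L p_gt1.
apply: (@leq_trans (p ^ L * p ^ (k * L) * p ^ L)).
  by rewrite -expnM leq_mul // leq_mul // ltnW.
by rewrite -!expnD leq_pexp2l ?(ltnW p_gt1) //; nia.
Qed.

Section LogBounds.
Local Open Scope R_scope.

Lemma ln_le x y : 0 < x -> x <= y -> ln x <= ln y.
Proof. by move=> x_gt0 [x_lt_y | <-]; [left; apply: ln_increasing | right]. Qed.

Lemma INR_expn b m : INR (b ^ m) = INR b ^ m.
Proof. by elim: m => [|m IHm] //; rewrite expnS mult_INR IHm. Qed.

Lemma INR_leq a b : (a <= b)%N -> INR a <= INR b.
Proof. by move/leP/le_INR. Qed.

Lemma ln_INR_gt0 b : (1 < b)%N -> 0 < ln (INR b).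
Proof. by move/ltP/lt_1_INR => b_gt1; rewrite -ln_1; apply: ln_increasing; lra. Qed.

Lemma ln_INR_expn b m : (1 < b)%N -> ln (INR (b ^ m)) = INR m * ln (INR b).
Proof. by move/ltP/lt_1_INR => b_gt1; rewrite INR_expn ln_pow //; lra. Qed.

Lemma le_div_ln_expn X K p m : (1 < p)%N -> (0 < m)%N -> (X * m <= K * p ^ m)%N ->
  INR X <= INR K * ln (INR p) * INR (p ^ m) / ln (INR (p ^ m)).
Proof.
move=> p_gt1 /ltP/lt_0_INR m_gt0 /INR_leq; rewrite !mult_INR => XK.
have lnp_gt0 := ln_INR_gt0 p_gt1.
rewrite ln_INR_expn //; apply: (Rmult_le_reg_r (INR m)) => //.
by replace (_ / _ * INR m) with (INR K * INR (p ^ m)) by (field; lra).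
Qed.

Lemma ln_mul_le_lnln_expn p n m : (1 < p)%N -> (0 < n)%N -> (4 * n <= m)%N ->
  ln (INR (n * m)) <= 2 * ln (ln (INR (p ^ m))).
Proof.
move=> p_gt1 /ltP/lt_0_INR n_gt0 /INR_leq; rewrite mult_INR => le_4n_m.
have lnp_gt0 := ln_INR_gt0 p_gt1.
have m_gt0 : 0 < INR m by simpl in le_4n_m; lra.
have ln2_le_lnp : ln 2 <= ln (INR p).
  by apply: ln_le; [lra | have := INR_leq p_gt1].
have lnlnp_ge : - ln 2 <= ln (ln (INR p)).
  by rewrite -ln_Rinv; [apply: ln_le; have := ln_lt_2 |]; lra.
have ln4n_le_lnm : ln (2 * 2 * INR n) <= ln (INR m).
  by apply: ln_le; simpl in le_4n_m; lra.
rewrite !ln_mult in ln4n_le_lnm; try lra.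
by rewrite mult_INR ln_INR_expn // !ln_mult //; lra.
Qed.

Lemma Rsum_le_const (T : finType) (A : {pred T}) (f : T -> R) c :
  (forall x, x \in A -> f x <= c) -> \big[Rplus/0]_(x in A) f x <= INR #|A| * c.
Proof.
move=> f_le; rewrite -sum1_card.
elim/big_rec2: _ => [/=|x s m Ax le_sm]; first lra.
by rewrite plus_INR; have := f_le x Ax; simpl; lra.
Qed.

End LogBounds.

Section PrimePowerField.

Variables (p k n m : nat) (F : finFieldType).
Hypotheses (p_prime : prime p) (k_gt0 : 0 < k) (coprime_np : coprime n p).
Hypothesis card_F : #|F| = p ^ m.

Local Notation r := (p ^ k).

Lemma field_degree_gt0 : 0 < m.
Proof. by have := finNzRing_gt1 F; rewrite card_F; case: m. Qed.

Local Open Scope ring_scope.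
Lemma expr_prime_powK (x : F) : x ^+ (r ^ m) = x.
Proof. by rewrite -expnM mulnC expnM -card_F expf_card_exp. Qed.
Local Close Scope ring_scope.

Lemma prime_pow_gt1 : 1 < r.
Proof. by rewrite -(exp1n k) ltn_exp2r ?prime_gt1. Qed.

Lemma coprime_prime_pow : coprime r n.
Proof. by rewrite coprime_pexpl // coprime_sym. Qed.

Lemma card_Sx_le : #|Sx n F| <= n * p ^ m.
Proof. by rewrite card_Sx -card_F leq_mul ?totient_leq ?leq_subr. Qed.

Lemma card_Ox_mul_degree : #|Ox r n F| * m <= 8 * k * n * p ^ m.
Proof.
set L := m %/ (4 * k).
have k4_gt0 : 0 < 4 * k by rewrite muln_gt0.
have m_lt : m < L.+1 * (4 * k) := ltn_ceil m k4_gt0.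
have budget := small_orbit_budget (prime_gt1 p_prime) k_gt0 (leq_divM m (4 * k)).
have O_le : #|Ox r n F| * L.+1 <= 2 * (n * p ^ m).
  apply: leq_trans (card_Ox_bound prime_pow_gt1 coprime_prime_pow field_degree_gt0
                     expr_prime_powK L) _.
  by rewrite mul2n -addnn leq_add ?card_Sx_le // -mulnA leq_mul2l budget orbT.
apply: (@leq_trans (#|Ox r n F| * L.+1 * (4 * k))).
  by rewrite -mulnA leq_mul2l (ltnW m_lt) orbT.
apply: leq_trans (leq_mul O_le (leqnn (4 * k))) _.
by set P := p ^ m; nia.
Qed.

Lemma card_Ox_le_degree o : o \in Ox r n F -> 0 < #|o| <= n * m.
Proof.
move=> Oo; have /andP[-> o_le] :=
  card_Ox_le prime_pow_gt1 coprime_prime_pow field_degree_gt0 expr_prime_powK Oo.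
by rewrite (leq_trans o_le) // mulnC leq_mul2r totient_leq orbT.
Qed.

Lemma card_Ox_le_div_ln :
  (INR #|Ox r n F| <= INR (8 * k * n) * ln (INR p) * INR #|F| / ln (INR #|F|))%R.
Proof.
by rewrite card_F; apply: le_div_ln_expn (prime_gt1 p_prime) field_degree_gt0 _;
  rewrite card_Ox_mul_degree.
Qed.

Lemma modulus_gt0 : 0 < n.
Proof.
move: coprime_np; rewrite lt0n; apply: contraTneq => ->.
by rewrite /coprime gcd0n gtn_eqF ?prime_gt1.
Qed.

Lemma sum_ln_card_Ox_le : 4 * n <= m ->
  (\big[Rplus/0]_(o in Ox r n F) ln (INR #|o|)
     <= 2 * INR (8 * k * n) * ln (INR p) * INR #|F| * ln (ln (INR #|F|)) / ln (INR #|F|))%R.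
Proof.
move=> le_4n_m.
have := ln_mul_le_lnln_expn (prime_gt1 p_prime) modulus_gt0 le_4n_m.
rewrite -card_F => ln_nm_le.
have ln_nm_ge0 : (0 <= ln (INR (n * m)))%R.
  rewrite -ln_1; apply: ln_le; first lra.
  by apply: (@INR_leq 1); rewrite muln_gt0 modulus_gt0 field_degree_gt0.
apply: Rle_trans (Rsum_le_const (c := 2 * ln (ln (INR #|F|)))%R _) _.
  move=> o /card_Ox_le_degree /andP[o_gt0 o_le]; apply: Rle_trans ln_nm_le.
  by apply: ln_le; [apply: lt_0_INR; apply/ltP | apply: INR_leq].
have := Rmult_le_compat_r _ _ _ (Rle_trans _ _ _ ln_nm_ge0 ln_nm_le) card_Ox_le_div_ln.
by move=> le; apply: Rle_trans le _; right; rewrite /Rdiv; ring.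
Qed.

End PrimePowerField.

Theorem lemma11p3 (p r n : nat) :
  prime p -> (exists k, (0 < k)%N /\ r = expn p k) -> coprime n p ->
  (forall (F : finFieldType) (m : nat), #|F| = expn p m ->
     (\sum_(o in Ox r n F) #|o|)%N = #|Sx n F| /\
     #|Sx n F| = (totient n * (#|F| - 1))%N) /\
  (exists C Q0 : R, forall (F : finFieldType) (m : nat), #|F| = expn p m ->
     (Q0 <= INR #|F|)%R ->
     (INR #|Ox r n F| <= C * INR #|F| / ln (INR #|F|))%R) /\
  (exists C Q0 : R, forall (F : finFieldType) (m : nat), #|F| = expn p m ->
     (Q0 <= INR #|F|)%R ->
     (\big[Rplus/0%R]_(o in Ox r n F) ln (INR #|o|)
        <= C * INR #|F| * ln (ln (INR #|F|)) / ln (INR #|F|))%R).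
Proof.
move=> p_prime [k [k_gt0 ->]] coprime_np.
split; [|split].
- move=> F m card_F; split; last exact: card_Sx.
  exact: sum_card_Ox (prime_pow_gt1 p_prime k_gt0) (coprime_prime_pow k_gt0 coprime_np)
           (field_degree_gt0 card_F) (expr_prime_powK k card_F).
- exists (INR (8 * k * n) * ln (INR p))%R, 0%R => F m card_F _.
  exact: card_Ox_le_div_ln p_prime k_gt0 coprime_np card_F.
- exists (2 * INR (8 * k * n) * ln (INR p))%R, (INR (p ^ (4 * n)))%R => F m card_F.
  move=> /INR_le/leP; rewrite {1}card_F leq_exp2l ?prime_gt1 // => le_4n_m.
  exact: sum_ln_card_Ox_le p_prime k_gt0 coprime_np card_F le_4n_m.
Qed.
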